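(* For every $(z,\tau)\in\mathbb{C}\times\mathbb{H}^2$ the following four identities hold, where theta constants without arguments are evaluated at $(0,\tau)$: \begin{align*} &\theta^2\!\begin{bmatrix}1\\ \tfrac12\end{bmatrix}\theta^2\!\begin{bmatrix}1\\ 0\end{bmatrix}\!(z,\tau)+\theta^2\!\begin{bmatrix}1\\ 0\end{bmatrix}\theta\!\begin{bmatrix}1\\ \tfrac12\end{bmatrix}\!(z,\tau)\,\theta\!\begin{bmatrix}1\\ \tfrac32\end{bmatrix}\!(z,\tau)-\theta^2\!\begin{bmatrix}1\\ \tfrac12\end{bmatrix}\theta^2\!\begin{bmatrix}1\\ 1\end{bmatrix}\!(z,\tau)=0,\\ &\theta^2\!\begin{bmatrix}1\\ \tfrac23\end{bmatrix}\theta\!\begin{bmatrix}1\\ \tfrac13\end{bmatrix}\!(z,\tau)\,\theta\!\begin{bmatrix}1\\ \tfrac53\end{bmatrix}\!(z,\tau)-\theta^2\!\begin{bmatrix}1\\ \tfrac13\end{bmatrix}\theta\!\begin{bmatrix}1\\ \tfrac23\end{bmatrix}\!(z,\tau)\,\theta\!\begin{bmatrix}1\\ \tfrac43\end{bmatrix}\!(z,\tau)+\theta\!\begin{bmatrix}1\\ 0\end{bmatrix}\theta\!\begin{bmatrix}1\\ \tfrac23\end{bmatrix}\theta^2\!\begin{bmatrix}1\\ 1\end{bmatrix}\!(z,\tau)=0,\\ &\theta^2\!\begin{bmatrix}1\\ \tfrac34\end{bmatrix}\theta\!\begin{bmatrix}1\\ \tfrac14\end{bmatrix}\!(z,\tau)\,\theta\!\begin{bmatrix}1\\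 \tfrac74\end{bmatrix}\!(z,\tau)-\theta^2\!\begin{bmatrix}1\\ \tfrac14\end{bmatrix}\theta\!\begin{bmatrix}1\\ \tfrac34\end{bmatrix}\!(z,\tau)\,\theta\!\begin{bmatrix}1\\ \tfrac54\end{bmatrix}\!(z,\tau)+\theta\!\begin{bmatrix}1\\ 0\end{bmatrix}\theta\!\begin{bmatrix}1\\ \tfrac12\end{bmatrix}\theta^2\!\begin{bmatrix}1\\ 1\end{bmatrix}\!(z,\tau)=0,\\ &\theta^2\!\begin{bmatrix}1\\ \tfrac35\end{bmatrix}\theta\!\begin{bmatrix}1\\ \tfrac15\end{bmatrix}\!(z,\tau)\,\theta\!\begin{bmatrix}1\\ \tfrac95\end{bmatrix}\!(z,\tau)-\theta^2\!\begin{bmatrix}1\\ \tfrac15\end{bmatrix}\theta\!\begin{bmatrix}1\\ \tfrac35\end{bmatrix}\!(z,\tau)\,\theta\!\begin{bmatrix}1\\ \tfrac75\end{bmatrix}\!(z,\tau)+\theta\!\begin{bmatrix}1\\ \tfrac15\end{bmatrix}\theta\!\begin{bmatrix}1\\ \tfrac35\end{bmatrix}\theta^2\!\begin{bmatrix}1\\ 1\end{bmatrix}\!(z,\tau)=0. \end{align*}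
   Context: $\mathbb{H}^2=\{\tau\in\mathbb{C}:\operatorname{Im}\tau>0\}$. For $\epsilon,\epsilon'\in\mathbb{R}$, $\zeta\in\mathbb{C}$, $\tau\in\mathbb{H}^2$, the theta function with characteristics is $\theta\begin{bmatrix}\epsilon\\ \epsilon'\end{bmatrix}(\zeta,\tau)=\sum_{n\in\mathbb{Z}}\exp\!\Big(2\pi i\Big[\tfrac12\big(n+\tfrac{\epsilon}{2}\big)^2\tau+\big(n+\tfrac{\epsilon}{2}\big)\big(\zeta+\tfrac{\epsilon'}{2}\big)\Big]\Big)$. The theta constant $\theta\begin{bmatrix}\epsilon\\ \epsilon'\end{bmatrix}$ (no argument) means $\theta\begin{bmatrix}\epsilon\\ \epsilon'\end{bmatrix}(0,\tau)$, and $\theta^k[\cdot]$ denotes the $k$-th power. *)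

From Stdlib Require Import Reals ZArith ClassicalEpsilon.
Open Scope R_scope.

Record Cplx := mkC { Cre : R ; Cim : R }.
Definition RtoC (x : R) : Cplx := mkC x 0.
Definition C0 : Cplx := RtoC 0.
Definition Ci : Cplx := mkC 0 1.
Definition Cadd (a b : Cplx) : Cplx := mkC (Cre a + Cre b) (Cim a + Cim b).
Definition Copp (a : Cplx) : Cplx := mkC (- Cre a) (- Cim a).
Definition Csub (a b : Cplx) : Cplx := Cadd a (Copp b).
Definition Cmul (a b : Cplx) : Cplx :=
  mkC (Cre a * Cre b - Cim a * Cim b) (Cre a * Cim b + Cim a * Cre b).
Definition Cnorm (a : Cplx) : R := sqrt (Cre a * Cre a + Cim a * Cim a).
Definition Cexp (a : Cplx) : Cplx :=
  mkC (exp (Cre a) * cos (Cim a)) (exp (Cre a) * sin (Cim a)).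
Definition Cpow2 (a : Cplx) : Cplx := Cmul a a.

Fixpoint Zpsum (f : Z -> Cplx) (N : nat) : Cplx :=
  match N with
  | O => f 0%Z
  | S M => Cadd (Zpsum f M)
             (Cadd (f (Z.of_nat (S M))) (f (- Z.of_nat (S M))%Z))
  end.

Definition Zseries_cv (f : Z -> Cplx) (l : Cplx) : Prop :=
  forall eps : R, eps > 0 -> exists N0 : nat,
    forall N : nat, (N >= N0)%nat -> Cnorm (Csub (Zpsum f N) l) < eps.

(* The value of the series (chosen limit; meaningful when it converges). *)
Definition Zsum (f : Z -> Cplx) : Cplx :=
  epsilon (inhabits C0) (fun l => Zseries_cv f l).

Definition in_H2 (tau : Cplx) : Prop := Cim tau > 0.

Definition theta_term (e e' : R) (zeta tau : Cplx) (n : Z) : Cplx :=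
  let m := IZR n + e / 2 in
  Cexp (Cmul (Cmul (RtoC (2 * PI)) Ci)
     (Cadd (Cmul (RtoC (/ 2 * (m * m))) tau)
           (Cmul (RtoC m) (Cadd zeta (RtoC (e' / 2)))))).

Definition theta (e e' : R) (zeta tau : Cplx) : Cplx := Zsum (theta_term e e' zeta tau).

Definition thetac (e e' : R) (tau : Cplx) : Cplx := theta e e' C0 tau.

(* Splitting the double series of theta[1;0](x, tau) theta[1;0](y, tau) according to the parity of
   m - n gives, with A = theta[0;0](., 2 tau) and B = theta[1;0](., 2 tau),
     theta[1;0](x) theta[1;0](y) = A(x + y) B(x - y) + B(x + y) A(x - y);
   the rearrangement is legitimate because the terms of a theta series decay like e^{-|n|}.
   As theta[1;e](z) = theta[1;0](z + e/2), every product in the four identities takes this form.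
   A is even and 1-periodic, B is even and 1-antiperiodic (so B(1/2) = 0); reducing all arguments
   modulo these symmetries turns each identity into a polynomial identity in A(0), B(0), A(c), B(c),
   A(2z), B(2z) for one or two rational constants c. *)

From Stdlib Require Import Reals Lra Lia ZArith List Permutation ClassicalEpsilon FunctionalExtensionality.
Import ListNotations.
Open Scope R_scope.

Declare Scope cplx_scope.
Delimit Scope cplx_scope with C.
Infix "+" := Cadd : cplx_scope.
Infix "-" := Csub : cplx_scope.
Infix "*" := Cmul : cplx_scope.
Notation "- x" := (Copp x) : cplx_scope.

Lemma Cplx_ext (a b : Cplx) : Cre a = Cre b -> Cim a = Cim b -> a = b.
Proof. destruct a, b; simpl; intros -> ->; reflexivity. Qed.

Definition C1 : Cplx := RtoC 1.

Lemma Cplx_ring : ring_theory C0 C1 Cadd Cmul Csub Copp eq.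
Proof. constructor; intros; apply Cplx_ext; simpl; ring. Qed.
Add Ring Cplx_ring : Cplx_ring.

Definition norm1 (a : Cplx) : R := Rabs (Cre a) + Rabs (Cim a).

Lemma norm1_ge0 a : 0 <= norm1 a.
Proof. unfold norm1; pose proof (Rabs_pos (Cre a)); pose proof (Rabs_pos (Cim a)); lra. Qed.

Lemma norm1_opp a : norm1 (- a)%C = norm1 a.
Proof. unfold norm1; simpl; rewrite !Rabs_Ropp; reflexivity. Qed.

Lemma norm1_add a b : norm1 (a + b)%C <= norm1 a + norm1 b.
Proof.
  unfold norm1; simpl.
  pose proof (Rabs_triang (Cre a) (Cre b)); pose proof (Rabs_triang (Cim a) (Cim b)); lra.
Qed.

Lemma norm1_sub a b : norm1 (a - b)%C <= norm1 a + norm1 b.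
Proof. unfold Csub; rewrite <- (norm1_opp b); apply norm1_add. Qed.

Lemma norm1_mul a b : norm1 (a * b)%C <= norm1 a * norm1 b.
Proof.
  unfold norm1; simpl; unfold Rminus.
  pose proof (Rabs_triang (Cre a * Cre b) (- (Cim a * Cim b))).
  pose proof (Rabs_triang (Cre a * Cim b) (Cim a * Cre b)).
  rewrite Rabs_Ropp, !Rabs_mult in *.
  pose proof (Rabs_pos (Cre a)); pose proof (Rabs_pos (Cim a));
  pose proof (Rabs_pos (Cre b)); pose proof (Rabs_pos (Cim b)); nra.
Qed.

Lemma Rabs_Cre_le_Cnorm a : Rabs (Cre a) <= Cnorm a.
Proof.
  unfold Cnorm; rewrite <- sqrt_Rsqr_abs; apply sqrt_le_1_alt.
  unfold Rsqr; pose proof (Rle_0_sqr (Cim a)); unfold Rsqr in *; lra.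
Qed.

Lemma Rabs_Cim_le_Cnorm a : Rabs (Cim a) <= Cnorm a.
Proof.
  unfold Cnorm; rewrite <- sqrt_Rsqr_abs; apply sqrt_le_1_alt.
  unfold Rsqr; pose proof (Rle_0_sqr (Cre a)); unfold Rsqr in *; lra.
Qed.

Lemma Cnorm_le_norm1 a : Cnorm a <= norm1 a.
Proof.
  unfold Cnorm, norm1; pose proof (norm1_ge0 a) as H; unfold norm1 in H.
  rewrite <- (sqrt_square _ H); apply sqrt_le_1_alt.
  pose proof (Rsqr_abs (Cre a)); pose proof (Rsqr_abs (Cim a)); unfold Rsqr in *.
  pose proof (Rabs_pos (Cre a)); pose proof (Rabs_pos (Cim a)); nra.
Qed.

Lemma Cexp_add a b : Cexp (a + b)%C = (Cexp a * Cexp b)%C.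
Proof. apply Cplx_ext; simpl; rewrite exp_plus; [rewrite cos_plus | rewrite sin_plus]; ring. Qed.

Lemma cos_sin_add_2PI_Z x k : cos (x + 2 * PI * IZR k) = cos x /\ sin (x + 2 * PI * IZR k) = sin x.
Proof.
  destruct (Z_le_gt_dec 0 k) as [Hk | Hk].
  - replace (2 * PI * IZR k) with (2 * INR (Z.to_nat k) * PI)
      by (rewrite INR_IZR_INZ, Z2Nat.id by lia; ring).
    split; [apply cos_period | apply sin_period].
  - replace x with (x + 2 * PI * IZR k + 2 * INR (Z.to_nat (- k)) * PI) at 2 4
      by (rewrite INR_IZR_INZ, Z2Nat.id, opp_IZR by lia; ring).
    split; symmetry; [apply cos_period | apply sin_period].
Qed.

Lemma Cexp_2PI_periodic a b k :
  Cre a = Cre b -> Cim a = Cim b + 2 * PI * IZR k -> Cexp a = Cexp b.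
Proof.
  intros Hre Him; destruct (cos_sin_add_2PI_Z (Cim b) k) as [Hc Hs].
  apply Cplx_ext; simpl; rewrite Hre, Him; [rewrite Hc | rewrite Hs]; reflexivity.
Qed.

Lemma Cexp_PI_antiperiodic a b k :
  Cre a = Cre b -> Cim a = Cim b + 2 * PI * IZR k + PI -> Cexp a = (- Cexp b)%C.
Proof.
  intros Hre Him; destruct (cos_sin_add_2PI_Z (Cim b) k) as [Hc Hs].
  apply Cplx_ext; simpl; rewrite Hre, Him;
    [rewrite cos_plus, Hc, Hs | rewrite sin_plus, Hs, Hc]; rewrite cos_PI, sin_PI; ring.
Qed.

Lemma norm1_Cexp a : norm1 (Cexp a) <= 2 * exp (Cre a).
Proof.
  unfold norm1, Cexp; simpl; pose proof (exp_pos (Cre a)).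
  rewrite !Rabs_mult, (Rabs_right (exp (Cre a))) by lra.
  assert (Rabs (cos (Cim a)) <= 1) by (apply Rabs_le, COS_bound).
  assert (Rabs (sin (Cim a)) <= 1) by (apply Rabs_le, SIN_bound).
  nra.
Qed.

(** * Convergence of complex sequences *)

Definition Ccv (u : nat -> Cplx) (l : Cplx) : Prop :=
  Un_cv (fun N => Cre (u N)) (Cre l) /\ Un_cv (fun N => Cim (u N)) (Cim l).

Lemma Ccv_add u v a b : Ccv u a -> Ccv v b -> Ccv (fun N => u N + v N)%C (a + b)%C.
Proof. intros [Hu1 Hu2] [Hv1 Hv2]; split; apply CV_plus; assumption. Qed.

Lemma Ccv_opp u a : Ccv u a -> Ccv (fun N => - u N)%C (- a)%C.
Proof. intros [H1 H2]; split; apply CV_opp; assumption. Qed.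

Lemma Ccv_sub u v a b : Ccv u a -> Ccv v b -> Ccv (fun N => u N - v N)%C (a - b)%C.
Proof. intros Hu Hv; apply Ccv_add; [exact Hu | exact (Ccv_opp _ _ Hv)]. Qed.

Lemma Ccv_mul u v a b : Ccv u a -> Ccv v b -> Ccv (fun N => u N * v N)%C (a * b)%C.
Proof.
  intros [Hu1 Hu2] [Hv1 Hv2]; split; simpl; [apply CV_minus | apply CV_plus]; apply CV_mult; assumption.
Qed.

Lemma Ccv_unique u a b : Ccv u a -> Ccv u b -> a = b.
Proof.
  intros [Ha1 Ha2] [Hb1 Hb2]; apply Cplx_ext; eapply UL_sequence; eassumption.
Qed.

Lemma Ccv_of_sub_0 u v l : Ccv u l -> Ccv (fun N => v N - u N)%C C0 -> Ccv v l.
Proof.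
  intros Hu Hvu.
  replace v with (fun N => u N + (v N - u N))%C
    by (apply functional_extensionality; intro; ring).
  replace l with (l + C0)%C by ring.
  exact (Ccv_add _ _ _ _ Hu Hvu).
Qed.

Lemma Ccv_iff_Cnorm u l :
  Ccv u l <-> forall eps, eps > 0 -> exists N0, forall N, (N >= N0)%nat -> Cnorm (u N - l)%C < eps.
Proof.
  split.
  - intros [H1 H2] eps Heps.
    destruct (H1 (eps / 2)) as [N1 HN1]; [lra|].
    destruct (H2 (eps / 2)) as [N2 HN2]; [lra|].
    exists (Nat.max N1 N2); intros N HN.
    specialize (HN1 N ltac:(lia)); specialize (HN2 N ltac:(lia)); unfold R_dist in *.
    apply (Rle_lt_trans _ (norm1 (u N - l)%C)); [apply Cnorm_le_norm1|].
    unfold norm1; simpl; unfold Rminus in *; lra.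
  - intros H; split; intros eps Heps; destruct (H eps Heps) as [N0 HN0]; exists N0; intros N HN;
      specialize (HN0 N HN); unfold R_dist.
    + exact (Rle_lt_trans _ _ _ (Rabs_Cre_le_Cnorm (u N - l)%C) HN0).
    + exact (Rle_lt_trans _ _ _ (Rabs_Cim_le_Cnorm (u N - l)%C) HN0).
Qed.

Lemma Ccv_of_Cauchy u :
  (forall eps, eps > 0 -> exists N0, forall n m,
     (n >= N0)%nat -> (m >= N0)%nat -> norm1 (u n - u m)%C < eps) ->
  exists l, Ccv u l.
Proof.
  intros Hc.
  assert (Hre : Cauchy_crit (fun N => Cre (u N))).
  { intros eps Heps; destruct (Hc eps Heps) as [N0 HN0]; exists N0; intros n m Hn Hm.
    specialize (HN0 n m Hn Hm); unfold norm1 in HN0; simpl in HN0; unfold R_dist, Rminus.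
    pose proof (Rabs_pos (Cim (u n) + - Cim (u m))); lra. }
  assert (Him : Cauchy_crit (fun N => Cim (u N))).
  { intros eps Heps; destruct (Hc eps Heps) as [N0 HN0]; exists N0; intros n m Hn Hm.
    specialize (HN0 n m Hn Hm); unfold norm1 in HN0; simpl in HN0; unfold R_dist, Rminus.
    pose proof (Rabs_pos (Cre (u n) + - Cre (u m))); lra. }
  destruct (R_complete _ Hre) as [x Hx]; destruct (R_complete _ Him) as [y Hy].
  exists (mkC x y); split; assumption.
Qed.

Lemma pow_le_pow_of_le_1 r m n : 0 <= r <= 1 -> (m <= n)%nat -> r ^ n <= r ^ m.
Proof.
  intros Hr Hmn; induction Hmn as [|n Hmn IH]; [lra|].
  simpl; pose proof (pow_le r n (proj1 Hr)); nra.
Qed.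

Section Geometric.

Variable r : R.
Hypothesis Hr : 0 <= r < 1.

Lemma geometric_small K eps : eps > 0 -> exists N0, forall N, (N >= N0)%nat -> K * r ^ N < eps.
Proof.
  intros Heps.
  destruct (pow_lt_1_zero r ltac:(rewrite Rabs_right; lra) (eps / (Rabs K + 1)))
    as [N0 HN0].
  { apply Rdiv_lt_0_compat; [lra | pose proof (Rabs_pos K); lra]. }
  exists N0; intros N HN; specialize (HN0 N HN).
  rewrite Rabs_right in HN0 by (apply Rle_ge, pow_le; lra).
  pose proof (Rabs_pos K); pose proof (pow_le r N (proj1 Hr)).
  apply (Rmult_lt_compat_l (Rabs K + 1)) in HN0; [| lra].
  replace ((Rabs K + 1) * (eps / (Rabs K + 1))) with eps in HN0 by (field; lra).
  pose proof (Rle_abs K); nra.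
Qed.

Lemma Ccv_0_of_geometric_bound u K : (forall N, norm1 (u N) <= K * r ^ N) -> Ccv u C0.
Proof.
  intros Hb; split; intros eps Heps; destruct (geometric_small K eps Heps) as [N0 HN0];
    exists N0; intros N HN; specialize (HN0 N HN); specialize (Hb N);
    unfold R_dist, norm1 in *; simpl; rewrite Rminus_0_r;
    pose proof (Rabs_pos (Cre (u N))); pose proof (Rabs_pos (Cim (u N))); lra.
Qed.

End Geometric.

Definition Csum {A : Type} (f : A -> Cplx) (l : list A) : Cplx := fold_right (fun x s => f x + s)%C C0 l.
Definition Rsum {A : Type} (g : A -> R) (l : list A) : R := fold_right (fun x s => g x + s) 0 l.

Section ListSums.

Context {A B : Type}.

Lemma Csum_app (f : A -> Cplx) (l1 l2 : list A) : Csum f (l1 ++ l2) = (Csum f l1 + Csum f l2)%C.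
Proof. induction l1 as [|x l1 IH]; simpl; [ring | rewrite IH; ring]. Qed.

Lemma Rsum_app (g : A -> R) (l1 l2 : list A) : Rsum g (l1 ++ l2) = Rsum g l1 + Rsum g l2.
Proof. induction l1 as [|x l1 IH]; simpl; [ring | rewrite IH; ring]. Qed.

Lemma Csum_perm (f : A -> Cplx) (l l' : list A) : Permutation l l' -> Csum f l = Csum f l'.
Proof. induction 1; simpl; congruence || ring. Qed.

Lemma Rsum_perm (g : A -> R) (l l' : list A) : Permutation l l' -> Rsum g l = Rsum g l'.
Proof. induction 1; simpl; congruence || ring. Qed.

Lemma Csum_ext (f f' : A -> Cplx) (l : list A) : (forall x, f x = f' x) -> Csum f l = Csum f' l.
Proof. intros E; induction l as [|x l IH]; simpl; [reflexivity | rewrite E, IH; reflexivity]. Qed.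

Lemma Rsum_scal c (g : A -> R) (l : list A) : Rsum (fun x => c * g x) l = c * Rsum g l.
Proof. induction l as [|x l IH]; simpl; [ring | rewrite IH; ring]. Qed.

Lemma Rsum_ge0 (g : A -> R) (l : list A) : (forall x, 0 <= g x) -> 0 <= Rsum g l.
Proof. intros Hg; induction l as [|x l IH]; simpl; [lra | pose proof (Hg x); lra]. Qed.

Lemma norm1_Csum_le (f : A -> Cplx) (g : A -> R) (l : list A) :
  (forall x, norm1 (f x) <= g x) -> norm1 (Csum f l) <= Rsum g l.
Proof.
  intros Hfg; induction l as [|x l IH]; simpl.
  - unfold norm1; simpl; rewrite Rabs_R0; lra.
  - pose proof (norm1_add (f x) (Csum f l)); pose proof (Hfg x); lra.
Qed.

Lemma Csum_map (f : B -> Cplx) (h : A -> B) (l : list A) : Csum f (map h l) = Csum (fun x => f (h x)) l.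
Proof. induction l as [|x l IH]; simpl; [reflexivity | rewrite IH; reflexivity]. Qed.

Variable dec : forall x y : A, {x = y} + {x <> y}.

Definition outside (S : list A) (x : A) : bool := if in_dec dec x S then false else true.

Lemma Permutation_incl_split (S L : list A) :
  NoDup S -> NoDup L -> incl S L -> Permutation L (S ++ filter (outside S) L).
Proof.
  intros HS HL HSL; apply NoDup_Permutation; [exact HL | |].
  - apply NoDup_app; [exact HS | apply NoDup_filter, HL |].
    intros x HxS HxF; apply filter_In in HxF; unfold outside in HxF.
    destruct (in_dec dec x S); [discriminate (proj2 HxF) | contradiction].
  - intros x; rewrite in_app_iff, filter_In; unfold outside.
    destruct (in_dec dec x S) as [Hx | Hx]; split; intros H.
    + left; exact Hx.
    + destruct H as [H | [_ H]]; [apply HSL, H | discriminate H].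
    + right; split; [exact H | reflexivity].
    + destruct H as [H | [H _]]; [contradiction | exact H].
Qed.

Lemma Rsum_incl_le (g : A -> R) (S L : list A) :
  (forall x, 0 <= g x) -> NoDup S -> NoDup L -> incl S L -> Rsum g S <= Rsum g L.
Proof.
  intros Hg HS HL HSL.
  rewrite (Rsum_perm g _ _ (Permutation_incl_split S L HS HL HSL)), Rsum_app.
  pose proof (Rsum_ge0 g (filter (outside S) L) Hg); lra.
Qed.

Lemma norm1_Csum_sub_le (f : A -> Cplx) (g : A -> R) (S L U : list A) :
  (forall x, norm1 (f x) <= g x) -> NoDup S -> NoDup L -> NoDup U -> incl S L -> incl L U ->
  norm1 (Csum f L - Csum f S)%C <= Rsum g U - Rsum g S.
Proof.
  intros Hfg HS HL HB HSL HLB.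
  assert (Hg : forall x, 0 <= g x) by (intros x; pose proof (norm1_ge0 (f x)); pose proof (Hfg x); lra).
  rewrite (Csum_perm f _ _ (Permutation_incl_split S L HS HL HSL)), Csum_app.
  rewrite (Rsum_perm g _ _ (Permutation_incl_split S U HS HB (incl_tran HSL HLB))), Rsum_app.
  replace (Csum f S + Csum f (filter (outside S) L) - Csum f S)%C
    with (Csum f (filter (outside S) L)) by ring.
  replace (Rsum g S + Rsum g (filter (outside S) U) - Rsum g S) with (Rsum g (filter (outside S) U)) by ring.
  eapply Rle_trans; [apply norm1_Csum_le, Hfg|].
  apply Rsum_incl_le; [exact Hg | apply NoDup_filter, HL | apply NoDup_filter, HB |].
  intros x; rewrite !filter_In; intros [Hx Hout]; split; [apply HLB, Hx | exact Hout].
Qed.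

End ListSums.

Lemma Csum_prod {A B : Type} (u : A -> Cplx) (v : B -> Cplx) (l : list A) (l' : list B) :
  Csum (fun p => u (fst p) * v (snd p))%C (list_prod l l') = (Csum u l * Csum v l')%C.
Proof.
  induction l as [|x l IH]; simpl; [ring|].
  rewrite Csum_app, IH, Csum_map; simpl.
  replace (Csum (fun y => u x * v y)%C l') with (u x * Csum v l')%C; [ring|].
  clear IH; induction l' as [|y l' IH']; simpl; [ring | rewrite <- IH'; ring].
Qed.

Lemma Rsum_prod {A B : Type} (u : A -> R) (v : B -> R) (l : list A) (l' : list B) :
  Rsum (fun p => u (fst p) * v (snd p)) (list_prod l l') = Rsum u l * Rsum v l'.
Proof.
  induction l as [|x l IH]; simpl; [ring|].
  rewrite Rsum_app, IH.
  replace (Rsum (fun p => u (fst p) * v (snd p)) (map (fun y => (x, y)) l')) with (u x * Rsum v l'); [ring|].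
  clear IH; induction l' as [|y l' IH']; simpl; [ring | rewrite <- IH'; ring].
Qed.

(** * Series over Z *)

Fixpoint zrange (N : nat) : list Z :=
  match N with
  | O => [0%Z]
  | S M => zrange M ++ [Z.of_nat (S M); (- Z.of_nat (S M))%Z]
  end.

Lemma Zpsum_S f N : Zpsum f (S N) = (Zpsum f N + (f (Z.of_nat (S N)) + f (- Z.of_nat (S N))%Z))%C.
Proof. reflexivity. Qed.

Lemma In_zrange n N : In n (zrange N) <-> (Z.abs n <= Z.of_nat N)%Z.
Proof.
  induction N as [|N IH]; simpl.
  - split; [intros [<- | []]; reflexivity | intros H; left; lia].
  - rewrite in_app_iff, IH; simpl; split.
    + intros [H | [H | [H | []]]]; lia.
    + intros H; destruct (Z_le_gt_dec (Z.abs n) (Z.of_nat N)); [left; exact l|].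
      right; destruct (Z_le_gt_dec 0 n); [left | right; left]; lia.
Qed.

Lemma NoDup_zrange N : NoDup (zrange N).
Proof.
  induction N as [|N IH]; simpl; [constructor; [intros [] | constructor]|].
  apply NoDup_app; [exact IH | |].
  - constructor; [simpl; lia | constructor; [intros [] | constructor]].
  - intros n Hn; apply In_zrange in Hn; simpl; lia.
Qed.

Lemma zrange_incl M N : (M <= N)%nat -> incl (zrange M) (zrange N).
Proof. intros HMN n; rewrite !In_zrange; lia. Qed.

Lemma Zpsum_Csum f N : Zpsum f N = Csum f (zrange N).
Proof.
  induction N as [|N IH]; simpl Zpsum; [unfold Csum; simpl; ring|].
  rewrite IH; simpl zrange; rewrite Csum_app; unfold Csum; simpl; ring.
Qed.

Lemma Zsum_unique f l : Ccv (Zpsum f) l -> Zsum f = l.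
Proof.
  intros Hl; apply (Ccv_unique (Zpsum f)); [| exact Hl].
  apply Ccv_iff_Cnorm; unfold Zsum; apply epsilon_spec.
  exists l; exact (proj1 (Ccv_iff_Cnorm _ _) Hl).
Qed.

Lemma Zsum_reflect f : Zsum (fun n => f (- n)%Z) = Zsum f.
Proof.
  assert (E : Zpsum (fun n => f (- n)%Z) = Zpsum f).
  { apply functional_extensionality; intros N; induction N as [|N IH]; simpl; [reflexivity|].
    rewrite IH; ring. }
  unfold Zsum, Zseries_cv; rewrite E; reflexivity.
Qed.

Definition geom_sum (r : R) (N : nat) : R := Rsum (fun n => r ^ Z.abs_nat n) (zrange N).

Lemma geom_sum_closed r N : r <> 1 -> geom_sum r N = (1 + r - 2 * r ^ S N) / (1 - r).
Proof.
  intros Hr; induction N as [|N IH]; unfold geom_sum in *.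
  - simpl; field; lra.
  - change (zrange (S N)) with (zrange N ++ [Z.of_nat (S N); (- Z.of_nat (S N))%Z]).
    rewrite Rsum_app, IH; unfold Rsum; cbn [fold_right].
    replace (Z.abs_nat (- Z.of_nat (S N))) with (S N) by lia.
    rewrite Zabs2Nat.id; simpl; field; lra.
Qed.

Section Summable.

Variable r : R.
Hypothesis Hr : 0 <= r < 1.

Lemma geom_sum_le N : geom_sum r N <= (1 + r) / (1 - r).
Proof.
  rewrite geom_sum_closed by lra.
  pose proof (pow_le r (S N) (proj1 Hr)).
  apply Rmult_le_compat_r; [left; apply Rinv_0_lt_compat; lra | lra].
Qed.

Lemma geom_sum_sub_bounds M N : (M <= N)%nat ->
  0 <= geom_sum r N - geom_sum r M <= 2 / (1 - r) * r ^ M.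
Proof.
  intros HMN; rewrite !geom_sum_closed by lra.
  pose proof (pow_le_pow_of_le_1 r (S M) (S N) ltac:(lra) ltac:(lia)).
  pose proof (pow_le_pow_of_le_1 r M (S M) ltac:(lra) ltac:(lia)).
  pose proof (pow_le r (S N) (proj1 Hr)).
  replace ((1 + r - 2 * r ^ S N) / (1 - r) - (1 + r - 2 * r ^ S M) / (1 - r))
    with (2 / (1 - r) * (r ^ S M - r ^ S N)) by (field; lra).
  assert (0 < 2 / (1 - r)) by (apply Rdiv_lt_0_compat; lra).
  split; [apply Rmult_le_pos | apply Rmult_le_compat_l]; lra.
Qed.

Definition dominated (C : R) (f : Z -> Cplx) : Prop :=
  forall n, norm1 (f n) <= C * r ^ Z.abs_nat n.

Definition summable (f : Z -> Cplx) : Prop := exists C, dominated C f.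

Lemma dominated_ge0 C f : dominated C f -> 0 <= C.
Proof. intros Hf; specialize (Hf 0%Z); pose proof (norm1_ge0 (f 0%Z)); simpl in Hf; lra. Qed.

Lemma Zpsum_sub_le C f M N : dominated C f -> (M <= N)%nat ->
  norm1 (Zpsum f N - Zpsum f M)%C <= C * (2 / (1 - r)) * r ^ M.
Proof.
  intros Hf HMN; rewrite !Zpsum_Csum.
  eapply Rle_trans.
  { apply (norm1_Csum_sub_le Z.eq_dec f (fun n => C * r ^ Z.abs_nat n));
      auto using NoDup_zrange, incl_refl, zrange_incl. }
  rewrite !Rsum_scal; fold (geom_sum r N) (geom_sum r M).
  pose proof (dominated_ge0 C f Hf); pose proof (geom_sum_sub_bounds M N HMN).
  rewrite Rmult_assoc, <- Rmult_minus_distr_l; apply Rmult_le_compat_l; lra.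
Qed.

Lemma Zpsum_cv f : summable f -> Ccv (Zpsum f) (Zsum f).
Proof.
  intros [C Hf].
  destruct (Ccv_of_Cauchy (Zpsum f)) as [l Hl].
  { intros eps Heps; destruct (geometric_small r Hr (2 * (C * (2 / (1 - r)))) eps Heps) as [N0 HN0].
    exists N0; intros n m Hn Hm.
    replace (Zpsum f n - Zpsum f m)%C with ((Zpsum f n - Zpsum f N0) - (Zpsum f m - Zpsum f N0))%C by ring.
    eapply Rle_lt_trans; [apply norm1_sub|].
    pose proof (Zpsum_sub_le C f N0 n Hf Hn); pose proof (Zpsum_sub_le C f N0 m Hf Hm).
    specialize (HN0 N0 (le_n _)); lra. }
  rewrite (Zsum_unique f l Hl); exact Hl.
Qed.

Lemma dominated_cv_0 C f (idx : nat -> Z) :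
  dominated C f -> (forall N, (N <= Z.abs_nat (idx N))%nat) -> Ccv (fun N => f (idx N)) C0.
Proof.
  intros Hf Hidx; apply (Ccv_0_of_geometric_bound r Hr _ C); intros N.
  eapply Rle_trans; [apply Hf|].
  apply Rmult_le_compat_l; [exact (dominated_ge0 C f Hf) | apply pow_le_pow_of_le_1; [lra | apply Hidx]].
Qed.

Lemma Zsum_opp f : summable f -> Zsum (fun n => - f n)%C = (- Zsum f)%C.
Proof.
  intros Hf; apply Zsum_unique.
  replace (Zpsum (fun n => - f n)%C) with (fun N => - Zpsum f N)%C.
  - exact (Ccv_opp _ _ (Zpsum_cv f Hf)).
  - apply functional_extensionality; intros N; induction N as [|N IH]; simpl; [reflexivity|].
    rewrite <- IH; ring.
Qed.

(* Reindexing by the reflection [n |-> -1 - n] shifts the symmetric partial sums by one term at each end. *)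
Lemma Zsum_reflect_half f : summable f -> Zsum (fun n => f (-1 - n)%Z) = Zsum f.
Proof.
  intros [C Hf]; apply Zsum_unique.
  apply (Ccv_of_sub_0 (Zpsum f)); [apply Zpsum_cv; exists C; exact Hf|].
  replace (fun N => Zpsum (fun n => f (-1 - n)%Z) N - Zpsum f N)%C
    with (fun N => f (- Z.of_nat N - 1)%Z - f (Z.of_nat N))%C.
  - replace C0 with (C0 - C0)%C by ring.
    apply Ccv_sub; apply (dominated_cv_0 C f); auto; intros N; lia.
  - apply functional_extensionality; intros N; induction N as [|N IH]; [reflexivity|].
    rewrite !Zpsum_S.
    replace (-1 - Z.of_nat (S N))%Z with (- Z.of_nat (S N) - 1)%Z by lia.
    replace (-1 - - Z.of_nat (S N))%Z with (Z.of_nat N) by lia.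
    replace (- Z.of_nat N - 1)%Z with (- Z.of_nat (S N))%Z in IH by lia.
    replace (Zpsum (fun n => f (-1 - n)%Z) N)
      with (Zpsum f N + (f (- Z.of_nat (S N))%Z - f (Z.of_nat N)))%C by (rewrite IH; ring).
    ring.
Qed.

End Summable.

(** * Rearranging a product of two series *)

Definition box (N : nat) : list (Z * Z) := list_prod (zrange N) (zrange N).

Definition pair_odd (p : Z * Z) : Z * Z := ((fst p + snd p)%Z, (fst p - snd p - 1)%Z).
Definition pair_even (p : Z * Z) : Z * Z := ((fst p + snd p)%Z, (fst p - snd p)%Z).

Definition parity_box (N : nat) : list (Z * Z) := map pair_odd (box N) ++ map pair_even (box N).

Lemma Zpair_eq_dec (p q : Z * Z) : {p = q} + {p <> q}.
Proof. decide equality; apply Z.eq_dec. Defined.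

Lemma In_box p N : In p (box N) <-> (Z.abs (fst p) <= Z.of_nat N /\ Z.abs (snd p) <= Z.of_nat N)%Z.
Proof. destruct p as [m n]; unfold box; rewrite in_prod_iff, !In_zrange; reflexivity. Qed.

Lemma NoDup_list_prod {A B : Type} (l : list A) (l' : list B) :
  NoDup l -> NoDup l' -> NoDup (list_prod l l').
Proof.
  intros Hl Hl'; induction Hl as [|x l Hx Hl IH]; simpl; [constructor|].
  apply NoDup_app; [| exact IH |].
  - apply FinFun.Injective_map_NoDup; [intros y y' E; congruence | exact Hl'].
  - intros p Hp Hp'; apply in_map_iff in Hp as [y [<- _]]; apply in_prod_iff in Hp'; tauto.
Qed.

Lemma NoDup_box N : NoDup (box N).
Proof. apply NoDup_list_prod; apply NoDup_zrange. Qed.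

Lemma NoDup_parity_box N : NoDup (parity_box N).
Proof.
  apply NoDup_app.
  - apply FinFun.Injective_map_NoDup; [| apply NoDup_box].
    intros [k l] [k' l'] E; unfold pair_odd in E; simpl in E; injection E; intros; f_equal; lia.
  - apply FinFun.Injective_map_NoDup; [| apply NoDup_box].
    intros [k l] [k' l'] E; unfold pair_even in E; simpl in E; injection E; intros; f_equal; lia.
  - intros q Hodd Heven; apply in_map_iff in Hodd as [[k l] [<- _]].
    apply in_map_iff in Heven as [[k' l'] [E _]].
    unfold pair_odd, pair_even in E; simpl in E; injection E; intros; lia.
Qed.

(* A pair [(m, n)] is [pair_odd (k, l)] or [pair_even (k, l)] according to the parity of [m - n]. *)
Lemma box_incl_parity_box N : incl (box N) (parity_box N).
Proof.
  intros [m n] H; apply In_box in H; simpl in H; apply in_app_iff.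
  destruct (Zeven_odd_dec (m - n)) as [He | Ho].
  - apply Zeven_ex in He as [j Hj]; right; apply in_map_iff; exists ((m - j)%Z, j).
    split; [unfold pair_even; simpl; f_equal; lia | apply In_box; simpl; lia].
  - apply Zodd_ex in Ho as [j Hj]; left; apply in_map_iff; exists ((m - j)%Z, j).
    split; [unfold pair_odd; simpl; f_equal; lia | apply In_box; simpl; lia].
Qed.

Lemma parity_box_incl_box N : incl (parity_box N) (box (2 * N + 1)).
Proof.
  intros q H; apply in_app_iff in H; apply In_box.
  destruct H as [H | H]; apply in_map_iff in H as [[k l] [<- H]]; apply In_box in H; simpl in *; lia.
Qed.

Lemma Zpsum_mul a b N :
  (Zpsum a N * Zpsum b N)%C = Csum (fun p => a (fst p) * b (snd p))%C (box N).
Proof. rewrite !Zpsum_Csum; unfold box; rewrite Csum_prod; reflexivity. Qed.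

Section CauchyProduct.

Variable r : R.
Hypothesis Hr : 0 <= r < 1.

(* Any enumeration between [box N] and [box (2N+1)] differs from [box N] by a tail of a
   product of two geometric series. *)
Lemma Csum_box_rearrange_cv_0 a b Ca Cb (L : nat -> list (Z * Z)) :
  dominated r Ca a -> dominated r Cb b ->
  (forall N, NoDup (L N) /\ incl (box N) (L N) /\ incl (L N) (box (2 * N + 1))) ->
  Ccv (fun N => Csum (fun p => a (fst p) * b (snd p)) (box N)
                - Csum (fun p => a (fst p) * b (snd p)) (L N))%C C0.
Proof.
  intros Ha Hb HL.
  set (w := fun p : Z * Z => (a (fst p) * b (snd p))%C).
  set (g := fun p : Z * Z => Ca * r ^ Z.abs_nat (fst p) * (Cb * r ^ Z.abs_nat (snd p))).
  assert (Hwg : forall p, norm1 (w p) <= g p).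
  { intros p; eapply Rle_trans; [apply norm1_mul|].
    apply Rmult_le_compat; auto using norm1_ge0. }
  assert (Hg : forall M, Rsum g (box M) = Ca * Cb * (geom_sum r M * geom_sum r M)).
  { intros M; unfold g, box.
    rewrite (Rsum_prod (fun n => Ca * r ^ Z.abs_nat n) (fun n => Cb * r ^ Z.abs_nat n)).
    rewrite !Rsum_scal; unfold geom_sum; ring. }
  pose proof (dominated_ge0 r Ca a Ha); pose proof (dominated_ge0 r Cb b Hb).
  apply (Ccv_0_of_geometric_bound r Hr _ (Ca * Cb * (2 / (1 - r)) * (2 * ((1 + r) / (1 - r))))).
  intros N; destruct (HL N) as (Hnd & Hin & Hout).
  replace (Csum w (box N) - Csum w (L N))%C with (- (Csum w (L N) - Csum w (box N)))%C by ring.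
  rewrite norm1_opp; eapply Rle_trans.
  { exact (norm1_Csum_sub_le Zpair_eq_dec w g (box N) (L N) (box (2 * N + 1))
             Hwg (NoDup_box N) Hnd (NoDup_box _) Hin Hout). }
  rewrite !Hg.
  pose proof (geom_sum_sub_bounds r Hr N (2 * N + 1) ltac:(lia)).
  pose proof (geom_sum_le r Hr N); pose proof (geom_sum_le r Hr (2 * N + 1)).
  assert (0 <= geom_sum r N) by (apply Rsum_ge0; intros; apply pow_le; lra).
  set (G1 := geom_sum r N) in *; set (G2 := geom_sum r (2 * N + 1)) in *.
  replace (Ca * Cb * (G2 * G2) - Ca * Cb * (G1 * G1)) with (Ca * Cb * ((G2 - G1) * (G2 + G1))) by ring.
  replace (Ca * Cb * (2 / (1 - r)) * (2 * ((1 + r) / (1 - r))) * r ^ N)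
    with (Ca * Cb * ((2 / (1 - r) * r ^ N) * (2 * ((1 + r) / (1 - r))))) by ring.
  apply Rmult_le_compat_l; [apply Rmult_le_pos; assumption|].
  apply Rmult_le_compat; lra.
Qed.

Lemma Zsum_mul_parity_split (a b al be be' al' : Z -> Cplx) :
  summable r a -> summable r b -> summable r al -> summable r be ->
  summable r be' -> summable r al' ->
  (forall k l, a (k + l)%Z * b (k - l - 1)%Z = al k * be l)%C ->
  (forall k l, a (k + l)%Z * b (k - l)%Z = be' k * al' l)%C ->
  (Zsum a * Zsum b = Zsum al * Zsum be + Zsum be' * Zsum al')%C.
Proof.
  intros [Ca Ha] [Cb Hb] Hal Hbe Hbe' Hal' Hodd Heven.
  apply (Ccv_unique (fun N => Zpsum a N * Zpsum b N)%C).
  { apply Ccv_mul; apply (Zpsum_cv r Hr); [exists Ca | exists Cb]; assumption. }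
  apply (Ccv_of_sub_0 (fun N => Zpsum al N * Zpsum be N + Zpsum be' N * Zpsum al' N)%C).
  { apply Ccv_add; apply Ccv_mul; apply (Zpsum_cv r Hr); assumption. }
  replace (fun N => Zpsum a N * Zpsum b N - (Zpsum al N * Zpsum be N + Zpsum be' N * Zpsum al' N))%C
    with (fun N => Csum (fun p => a (fst p) * b (snd p)) (box N)
                   - Csum (fun p => a (fst p) * b (snd p)) (parity_box N))%C.
  - apply (Csum_box_rearrange_cv_0 a b Ca Cb parity_box Ha Hb).
    intros N; split; [apply NoDup_parity_box|].
    split; [apply box_incl_parity_box | apply parity_box_incl_box].
  - apply functional_extensionality; intros N.
    unfold parity_box; rewrite !Zpsum_mul, Csum_app, !Csum_map.
    f_equal; f_equal; apply Csum_ext; intros [k l]; simpl; [apply Hodd | apply Heven].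
Qed.

End CauchyProduct.

(** * Theta functions *)

Lemma quadratic_le a b u : 0 < a -> b * u - a * (u * u) <= b * b / (4 * a).
Proof.
  intros Ha.
  assert (E : b * b / (4 * a) - (b * u - a * (u * u)) = (2 * a * u - b) * (2 * a * u - b) / (4 * a))
    by (field; lra).
  assert (0 <= (2 * a * u - b) * (2 * a * u - b) / (4 * a))
    by (unfold Rdiv; apply Rmult_le_pos; [apply Rle_0_sqr | left; apply Rinv_0_lt_compat; lra]).
  lra.
Qed.

Lemma exp_le_compat x y : x <= y -> exp x <= exp y.
Proof. intros [Hlt | ->]; [left; apply exp_increasing, Hlt | right; reflexivity]. Qed.

Lemma exp_neg1_bounds : 0 <= exp (-1) < 1.
Proof. split; [left; apply exp_pos | rewrite <- exp_0; apply exp_increasing; lra]. Qed.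

Lemma exp_neg1_pow k : exp (-1) ^ k = exp (- INR k).
Proof.
  induction k as [|k IH]; simpl pow; [replace (- INR 0) with 0 by (simpl; ring); rewrite exp_0; reflexivity|].
  rewrite IH, S_INR, <- exp_plus; f_equal; ring.
Qed.

(* The Gaussian factor [exp (-pi m^2 Im tau)] beats any linear exponential, so every term is at most
   [C e^{-|n|}]. *)
Lemma theta_term_summable e e' zeta tau :
  in_H2 tau -> summable (exp (-1)) (theta_term e e' zeta tau).
Proof.
  unfold in_H2; intros Ht.
  set (b := 2 * PI * Rabs (Cim zeta) + 1).
  set (K := b * b / (4 * (PI * Cim tau)) + Rabs e / 2).
  exists (2 * exp K); intros n.
  rewrite exp_neg1_pow, Rmult_assoc, <- exp_plus.
  eapply Rle_trans; [apply norm1_Cexp | apply Rmult_le_compat_l; [lra | apply exp_le_compat]].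
  set (m := IZR n + e / 2).
  assert (Hre : Cre (Cmul (Cmul (RtoC (2 * PI)) Ci)
                  (Cadd (Cmul (RtoC (/ 2 * (m * m))) tau) (Cmul (RtoC m) (Cadd zeta (RtoC (e' / 2))))))
                = - (PI * Cim tau) * (m * m) - 2 * PI * (m * Cim zeta)) by (simpl; field).
  unfold theta_term; cbv zeta; fold m; rewrite Hre.
  assert (Hn : INR (Z.abs_nat n) <= Rabs m + Rabs e / 2).
  { rewrite INR_IZR_INZ, Nat2Z.inj_abs_nat, abs_IZR.
    replace (IZR n) with (m - e / 2) by (unfold m; ring).
    pose proof (Rabs_triang m (- (e / 2))); rewrite Rabs_Ropp in H.
    unfold Rdiv in *; rewrite Rabs_mult, (Rabs_right (/ 2)) in H by lra; unfold Rminus; lra. }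
  assert (Hmy : - (m * Cim zeta) <= Rabs (Cim zeta) * Rabs m).
  { pose proof (Rle_abs (- (m * Cim zeta))) as H; rewrite Rabs_Ropp, Rabs_mult in H; lra. }
  assert (Hm2 : m * m = Rabs m * Rabs m)
    by (rewrite <- Rabs_mult; symmetry; apply Rabs_right, Rle_ge, Rle_0_sqr).
  pose proof (quadratic_le (PI * Cim tau) b (Rabs m) ltac:(pose proof PI_RGT_0; nra)).
  assert (2 * PI * - (m * Cim zeta) <= 2 * PI * (Rabs (Cim zeta) * Rabs m))
    by (apply Rmult_le_compat_l; [pose proof PI_RGT_0; lra | exact Hmy]).
  assert (b * Rabs m = 2 * PI * (Rabs (Cim zeta) * Rabs m) + Rabs m) by (unfold b; ring).
  rewrite Hm2; unfold K; lra.
Qed.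

Lemma in_H2_double tau : in_H2 tau -> in_H2 (tau + tau)%C.
Proof. unfold in_H2; simpl; lra. Qed.

Lemma theta_char_shift e e' z tau : theta e e' z tau = theta e 0 (z + RtoC (e' / 2))%C tau.
Proof.
  unfold theta; f_equal; apply functional_extensionality; intros n; unfold theta_term.
  f_equal; apply Cplx_ext; simpl; field.
Qed.

Lemma theta00_even s tau : theta 0 0 (- s)%C tau = theta 0 0 s tau.
Proof.
  unfold theta; rewrite <- (Zsum_reflect (theta_term 0 0 s tau)); f_equal.
  apply functional_extensionality; intros n; unfold theta_term.
  f_equal; apply Cplx_ext; cbn [Cre Cim Cmul Cadd RtoC Ci Copp]; rewrite opp_IZR; field.
Qed.

Lemma theta10_even s tau : in_H2 tau -> theta 1 0 (- s)%C tau = theta 1 0 s tau.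
Proof.
  intros Ht; unfold theta.
  rewrite <- (Zsum_reflect_half _ exp_neg1_bounds (theta_term 1 0 s tau)) by (apply theta_term_summable, Ht).
  f_equal; apply functional_extensionality; intros n; unfold theta_term.
  f_equal; apply Cplx_ext; cbn [Cre Cim Cmul Cadd RtoC Ci Copp]; rewrite minus_IZR; field.
Qed.

Lemma theta00_shift1 s tau : theta 0 0 (s + RtoC 1)%C tau = theta 0 0 s tau.
Proof.
  unfold theta; f_equal; apply functional_extensionality; intros n; unfold theta_term.
  apply Cexp_2PI_periodic with (k := n); simpl; field.
Qed.

Lemma theta10_shift1 s tau : in_H2 tau -> theta 1 0 (s + RtoC 1)%C tau = (- theta 1 0 s tau)%C.
Proof.
  intros Ht; unfold theta.
  rewrite <- (Zsum_opp _ exp_neg1_bounds) by (apply theta_term_summable, Ht).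
  f_equal; apply functional_extensionality; intros n; unfold theta_term.
  apply Cexp_PI_antiperiodic with (k := n); simpl; field.
Qed.

(* The double series over [(m, n)] splits by the parity of [m - n]; with [m = k + l] and
   [n = k - l - 1] (resp. [n = k - l]) it factors into series with modulus [2 tau]. *)
Lemma theta10_mul x y tau : in_H2 tau ->
  (theta 1 0 x tau * theta 1 0 y tau
   = theta 0 0 (x + y) (tau + tau) * theta 1 0 (x - y) (tau + tau)
     + theta 1 0 (x + y) (tau + tau) * theta 0 0 (x - y) (tau + tau))%C.
Proof.
  intros Ht; pose proof (in_H2_double tau Ht) as Ht2.
  apply (Zsum_mul_parity_split _ exp_neg1_bounds); auto using theta_term_summable;
    intros k l; unfold theta_term; rewrite <- !Cexp_add; f_equal;
    apply Cplx_ext; cbn [Cre Cim Cmul Cadd Csub RtoC Ci Copp]; rewrite ?plus_IZR, ?minus_IZR; field.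
Qed.

Lemma RtoC_opp u : RtoC (- u) = (- RtoC u)%C.
Proof. apply Cplx_ext; simpl; ring. Qed.

Lemma RtoC_add1 u : RtoC (u + 1) = (RtoC u + RtoC 1)%C.
Proof. apply Cplx_ext; simpl; ring. Qed.

Lemma theta00_real_congr tau r1 r2 :
  r1 = r2 \/ r1 = - r2 \/ r1 = r2 + 1 \/ r1 = - r2 + 1 \/ r1 = r2 - 1 \/ r1 = - r2 - 1 ->
  theta 0 0 (RtoC r1) tau = theta 0 0 (RtoC r2) tau.
Proof.
  assert (Hopp : forall u, theta 0 0 (RtoC (- u)) tau = theta 0 0 (RtoC u) tau)
    by (intros u; rewrite RtoC_opp; apply theta00_even).
  assert (Hadd : forall u, theta 0 0 (RtoC (u + 1)) tau = theta 0 0 (RtoC u) tau)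
    by (intros u; rewrite RtoC_add1; apply theta00_shift1).
  intros [-> | [-> | [-> | [-> | [-> | ->]]]]].
  - reflexivity.
  - apply Hopp.
  - apply Hadd.
  - rewrite Hadd; apply Hopp.
  - rewrite <- (Hadd (r2 - 1)); f_equal; f_equal; ring.
  - replace (- r2 - 1) with (- (r2 + 1)) by ring; rewrite Hopp; apply Hadd.
Qed.

Lemma theta10_real_congr_even tau r1 r2 : in_H2 tau -> r1 = r2 \/ r1 = - r2 ->
  theta 1 0 (RtoC r1) tau = theta 1 0 (RtoC r2) tau.
Proof.
  intros Ht [-> | ->]; [reflexivity | rewrite RtoC_opp; apply theta10_even, Ht].
Qed.

Lemma theta10_real_congr_odd tau r1 r2 : in_H2 tau ->
  r1 = r2 + 1 \/ r1 = - r2 + 1 \/ r1 = r2 - 1 \/ r1 = - r2 - 1 ->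
  theta 1 0 (RtoC r1) tau = (- theta 1 0 (RtoC r2) tau)%C.
Proof.
  intros Ht.
  assert (Hopp : forall u, theta 1 0 (RtoC (- u)) tau = theta 1 0 (RtoC u) tau)
    by (intros u; rewrite RtoC_opp; apply theta10_even, Ht).
  assert (Hadd : forall u, theta 1 0 (RtoC (u + 1)) tau = (- theta 1 0 (RtoC u) tau)%C)
    by (intros u; rewrite RtoC_add1; apply theta10_shift1, Ht).
  intros [-> | [-> | [-> | ->]]].
  - apply Hadd.
  - rewrite Hadd, Hopp; reflexivity.
  - replace r2 with ((r2 - 1) + 1) at 2 by ring; rewrite Hadd; ring.
  - rewrite <- (Hopp r2); replace (- r2) with ((- r2 - 1) + 1) at 2 by ring; rewrite Hadd; ring.
Qed.

Lemma theta10_half tau : in_H2 tau -> theta 1 0 (RtoC (1 / 2)) tau = C0.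
Proof.
  intros Ht; pose proof (theta10_real_congr_odd tau (1 / 2) (1 / 2) Ht ltac:(right; left; lra)) as H.
  destruct (theta 1 0 (RtoC (1 / 2)) tau) as [u v]; injection H; intros; apply Cplx_ext; simpl; lra.
Qed.

Lemma theta1_mul_same e1 e2 z tau : in_H2 tau ->
  (theta 1 e1 z tau * theta 1 e2 z tau
   = theta 0 0 (z + z + RtoC ((e1 + e2) / 2)) (tau + tau) * theta 1 0 (RtoC ((e1 - e2) / 2)) (tau + tau)
     + theta 1 0 (z + z + RtoC ((e1 + e2) / 2)) (tau + tau) * theta 0 0 (RtoC ((e1 - e2) / 2)) (tau + tau))%C.
Proof.
  intros Ht; rewrite (theta_char_shift 1 e1), (theta_char_shift 1 e2), theta10_mul by exact Ht.
  replace (z + RtoC (e1 / 2) + (z + RtoC (e2 / 2)))%C with (z + z + RtoC ((e1 + e2) / 2))%C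
    by (apply Cplx_ext; simpl; field).
  replace (z + RtoC (e1 / 2) - (z + RtoC (e2 / 2)))%C with (RtoC ((e1 - e2) / 2))
    by (apply Cplx_ext; simpl; field).
  reflexivity.
Qed.

Lemma thetac1_mul e1 e2 tau : in_H2 tau ->
  (thetac 1 e1 tau * thetac 1 e2 tau
   = theta 0 0 (RtoC ((e1 + e2) / 2)) (tau + tau) * theta 1 0 (RtoC ((e1 - e2) / 2)) (tau + tau)
     + theta 1 0 (RtoC ((e1 + e2) / 2)) (tau + tau) * theta 0 0 (RtoC ((e1 - e2) / 2)) (tau + tau))%C.
Proof.
  intros Ht; unfold thetac; rewrite theta1_mul_same by exact Ht.
  replace (C0 + C0 + RtoC ((e1 + e2) / 2))%C with (RtoC ((e1 + e2) / 2)) by (apply Cplx_ext; simpl; ring).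
  reflexivity.
Qed.

Ltac solve_disj := first [ lra | left; lra | right; solve_disj ].

(* Removes the shifts [s + 0] and [s + 1] of the arguments [2 z + (e1 + e2) / 2]. *)
Ltac reduce_integer_shifts Ht :=
  repeat match goal with
  | |- context [theta ?e ?e' (Cadd ?s (RtoC ?r)) ?t] =>
      first [ replace (Cadd s (RtoC r)) with s by (apply Cplx_ext; simpl; lra)
            | replace r with 1 by lra;
              first [ rewrite (theta00_shift1 s t) | rewrite (theta10_shift1 s t Ht) ] ]
  end.

(* Rewrites each theta constant [theta _ 0 (RtoC r) (2 tau)] to one with argument [0], [r1] or [r2]. *)
Ltac reduce_real_args Ht r1 r2 :=
  repeat match goal with
  | |- context [theta 0 0 (RtoC ?r) ?t] =>
      assert_fails (first [ constr_eq r 0 | constr_eq r r1 | constr_eq r r2 ]);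
      first [ rewrite (theta00_real_congr t r 0) by solve_disj
            | rewrite (theta00_real_congr t r r1) by solve_disj
            | rewrite (theta00_real_congr t r r2) by solve_disj ]
  | |- context [theta 1 0 (RtoC ?r) ?t] =>
      assert_fails (first [ constr_eq r 0 | constr_eq r r1 | constr_eq r r2 ]);
      first [ rewrite (theta10_real_congr_even t r 0 Ht) by solve_disj
            | rewrite (theta10_real_congr_even t r r1 Ht) by solve_disj
            | rewrite (theta10_real_congr_even t r r2 Ht) by solve_disj
            | rewrite (theta10_real_congr_odd t r 0 Ht) by solve_disj
            | rewrite (theta10_real_congr_odd t r r1 Ht) by solve_disj
            | rewrite (theta10_real_congr_odd t r r2 Ht) by solve_disj ]
  end.

Theorem mainTheorem1 (z tau : Cplx) (Htau : in_H2 tau) :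
  Csub (Cadd
    (Cmul (Cpow2 (thetac 1 (1/2) tau)) (Cpow2 (theta 1 0 z tau)))
    (Cmul (Cpow2 (thetac 1 0 tau))
          (Cmul (theta 1 (1/2) z tau) (theta 1 (3/2) z tau))))
    (Cmul (Cpow2 (thetac 1 (1/2) tau)) (Cpow2 (theta 1 1 z tau))) = C0
  /\
  Cadd (Csub
    (Cmul (Cpow2 (thetac 1 (2/3) tau))
          (Cmul (theta 1 (1/3) z tau) (theta 1 (5/3) z tau)))
    (Cmul (Cpow2 (thetac 1 (1/3) tau))
          (Cmul (theta 1 (2/3) z tau) (theta 1 (4/3) z tau))))
    (Cmul (Cmul (thetac 1 0 tau) (thetac 1 (2/3) tau))
          (Cpow2 (theta 1 1 z tau))) = C0
  /\
  Cadd (Csub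
    (Cmul (Cpow2 (thetac 1 (3/4) tau))
          (Cmul (theta 1 (1/4) z tau) (theta 1 (7/4) z tau)))
    (Cmul (Cpow2 (thetac 1 (1/4) tau))
          (Cmul (theta 1 (3/4) z tau) (theta 1 (5/4) z tau))))
    (Cmul (Cmul (thetac 1 0 tau) (thetac 1 (1/2) tau))
          (Cpow2 (theta 1 1 z tau))) = C0
  /\
  Cadd (Csub
    (Cmul (Cpow2 (thetac 1 (3/5) tau))
          (Cmul (theta 1 (1/5) z tau) (theta 1 (9/5) z tau)))
    (Cmul (Cpow2 (thetac 1 (1/5) tau))
          (Cmul (theta 1 (3/5) z tau) (theta 1 (7/5) z tau))))
    (Cmul (Cmul (thetac 1 (1/5) tau) (thetac 1 (3/5) tau))
          (Cpow2 (theta 1 1 z tau))) = C0.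
Proof.
  pose proof (in_H2_double tau Htau) as Ht2.
  unfold Cpow2.
  repeat rewrite (thetac1_mul _ _ _ Htau).
  repeat rewrite (theta1_mul_same _ _ _ _ Htau).
  reduce_integer_shifts Ht2.
  split; [| split; [| split]].
  - reduce_real_args Ht2 (1 / 2) (1 / 2); rewrite (theta10_half _ Ht2); ring.
  - reduce_real_args Ht2 (1 / 3) (1 / 3); ring.
  - reduce_real_args Ht2 (1 / 4) (1 / 4); ring.
  - reduce_real_args Ht2 (1 / 5) (2 / 5); ring.
Qed.
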